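(* Let $n\geq 1$. The map $\Gamma$, sending a cell $\langle c^m,c^M\rangle$ of size $n$ to the $(n-1)$-tuple $(\gamma(c^m_1,c^M_1),\dots,\gamma(c^m_{n-1},c^M_{n-1}))$, where $\gamma(a,b)=a$ if $a<0$ and $\gamma(a,b)=b$ if $a\geq 0$, is a bijection from the set of cells of size $n$ to the set $\mathcal{CC}^{sync}_n$ of synchronized cubic coordinates of size $n$.
   Context: A Tamari diagram of size $n$ is a word $u=u_1\cdots u_n$ of integers with $0\leq u_i\leq n-i$ and $u_{i+j}\leq u_i-j$ for all $i\in[n]$, $0\leq j\leq u_i$. A dual Tamari diagram of size $n$ is a word $v$ of integers with $0\leq v_i\leq i-1$ and $v_{i-j}\leq v_i-j$ for all $i\in[n]$, $0\leq j\leq v_i$. $(u,v)$ is a Tamari interval diagram if moreover for all $1\leq i<j\leq n$ with $j-i\leq u_i$ one has $v_j<j-i$. A cubic coordinate of size $n$ is $c\in\mathbb{Z}^{n-1}$ such that $(u,v)$ with $u_i=\max(c_i,0)$ ($i\in[n-1]$), $u_n=0$, $v_1=0$, $v_i=|\min(c_{i-1},0)|$ ($2\leq i\leq n$) is a Tamari interval diagram; $\mathcal{CC}_n$ denotes their set. A cubic coordinate is synchronized if all its entries are nonzero. For $c\in\mathcal{CC}_n$ and $i\in[n-1]$, the minimal increase $\uparrow_i(c)$ is defined when there exists a cubic coordinate agreeing with $c$ outside position $i$ and with $i$-th entry $>c_i$; then $\uparrow_i(c)$ is the tuple obtained from $c$ by replacing $c_i$ by the smallest integer $t>c_i$ such that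 the result is a cubic coordinate (equivalently, $\uparrow_i(c)$ covers $c$ in the componentwise order on $\mathcal{CC}_n$ and differs from $c$ only at position $i$). $c$ is minimal-cellular if $\uparrow_i(c)$ is defined for every $i\in[n-1]$. For minimal-cellular $c^m$, its maximal-cellular correspondent is $c^M=\uparrow_1(\uparrow_2(\cdots(\uparrow_{n-1}(c^m))\cdots))$ (every step of this composition is defined), and the pair $\langle c^m,c^M\rangle$ is a cell of size $n$. *)

(* Positions are 1-based as in the paper. *)
From mathcomp Require Import all_boot all_order all_algebra.
Set Implicit Arguments. Unset Strict Implicit. Unset Printing Implicit Defensive.
Import Order.TTheory GRing.Theory Num.Theory.
Local Open Scope ring_scope.

Definition tamari_diagram (n : nat) (u : nat -> int) : Prop :=
  forall i : nat, (1 <= i <= n)%N ->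
    (0 <= u i /\ u i <= (n - i)%:Z) /\
    forall j : nat, j%:Z <= u i -> u (i + j)%N <= u i - j%:Z.

Definition dual_tamari_diagram (n : nat) (v : nat -> int) : Prop :=
  forall i : nat, (1 <= i <= n)%N ->
    (0 <= v i /\ v i <= (i - 1)%:Z) /\
    forall j : nat, j%:Z <= v i -> v (i - j)%N <= v i - j%:Z.

Definition tamari_interval_diagram (n : nat) (u v : nat -> int) : Prop :=
  [/\ tamari_diagram n u, dual_tamari_diagram n v &
      forall i j : nat, (1 <= i)%N -> (i < j)%N -> (j <= n)%N ->
        (j - i)%:Z <= u i -> v j < (j - i)%:Z].

(* c is a tuple (c_1,...,c_{n-1}) stored as a seq int; c_i = nth 0 c (i-1). *)
Definition entry (c : seq int) (i : nat) : int := nth 0 c i.-1.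

Definition u_of (n : nat) (c : seq int) (i : nat) : int :=
  if (i < n)%N then Num.max (entry c i) 0 else 0.

Definition v_of (c : seq int) (i : nat) : int :=
  if (i <= 1)%N then 0 else `|Num.min (entry c i.-1) 0|.

Definition cubic_coordinate (n : nat) (c : seq int) : Prop :=
  size c = n.-1 /\ tamari_interval_diagram n (u_of n c) (v_of c).

Definition synchronized (n : nat) (c : seq int) : Prop :=
  cubic_coordinate n c /\ forall i : nat, (1 <= i <= n.-1)%N -> entry c i != 0.

Definition set_entry (c : seq int) (i : nat) (t : int) : seq int :=
  set_nth 0 c i.-1 t.

Definition up_defined (n : nat) (c : seq int) (i : nat) : Prop :=
  exists t : int, entry c i < t /\ cubic_coordinate n (set_entry c i t).

Definition up_rel (n : nat) (c : seq int) (i : nat) (d : seq int) : Prop :=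
  exists t : int, [/\ d = set_entry c i t, entry c i < t,
    cubic_coordinate n d &
    forall s : int, entry c i < s -> s < t -> ~ cubic_coordinate n (set_entry c i s)].

Definition minimal_cellular (n : nat) (c : seq int) : Prop :=
  cubic_coordinate n c /\ forall i : nat, (1 <= i <= n.-1)%N -> up_defined n c i.

(* ups n c k d : d = \uparrow_1(\uparrow_2(...(\uparrow_k(c))...)) *)
Fixpoint ups (n : nat) (c : seq int) (k : nat) (d : seq int) : Prop :=
  match k with
  | 0 => d = c
  | k'.+1 => exists e : seq int, up_rel n c k'.+1 e /\ ups n e k' d
  end.

Definition maximal_correspondent (n : nat) (cm cM : seq int) : Prop :=
  ups n cm n.-1 cM.

Definition is_cell (n : nat) (cm cM : seq int) : Prop :=
  minimal_cellular n cm /\ maximal_correspondent n cm cM.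

Definition gamma (a b : int) : int := if a < 0 then a else b.

Definition Gamma (cm cM : seq int) : seq int :=
  [seq gamma p.1 p.2 | p <- zip cm cM].

From mathcomp Require Import all_boot all_order all_algebra.
From mathcomp Require Import zify.
From Stdlib Require Import FunctionalExtensionality.
Import Order.TTheory GRing.Theory Num.Theory.
Local Open Scope ring_scope.
Set Implicit Arguments. Unset Strict Implicit. Unset Printing Implicit Defensive.

(* Let [s] be synchronized.  For [s_i > 0] take the interval [[K - i - 1, s_i]] in
   coordinate [i], where [K > i] is the first position with the same right reach
   [K + max(s_K, 0) = i + s_i]; for [s_i < 0] take [[s_i, q + 1 - i]], where [q < i] is
   the last position with the same left reach [q + min(s_q, 0) = i + s_i].  Every vertex
   of the resulting box is a cubic coordinate, whereas a point whose coordinate [k] lies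
   strictly inside its interval, with the later coordinates at the top and the earlier
   ones at the bottom, violates the Tamari condition at [K] or the dual one at [q].  So
   raising the coordinates [n-1, ..., 1] in turn from the bottom vertex is a sequence of
   minimal increases, the box is a cell, and [Gamma] maps it back to [s].  Conversely,
   the bottom [cm] of a cell determines [s] through [s_i = cm_i] if [cm_i < 0] and
   [s_i = cm_i + 1 + max(s_(i + cm_i + 1), 0)] otherwise, and the top of the cell is
   determined by [cm] because minimal increases are unique. *)

(* Unlike [entry], [coord c] vanishes at position [0] as well as past the end of [c]. *)
Definition coord (c : seq int) (p : nat) : int := if p == 0%N then 0 else nth 0 c p.-1.

(* The conditions of [cubic_coordinate n c], restated on the entries of [c]. *)
Record cubic_fun (n : nat) (f : nat -> int) : Prop := CubicFun {
  cubic_bounds : forall i, (1 <= i <= n.-1)%N -> - i%:Z <= f i /\ f i <= n%:Z - i%:Z;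
  cubic_tamari : forall i j, (1 <= i)%N -> (1 <= j)%N -> (i + j <= n.-1)%N ->
    0 < f i -> j%:Z <= f i -> f (i + j)%N <= f i - j%:Z;
  cubic_interval : forall i d, (1 <= i)%N -> (1 <= d)%N -> (i + d <= n.-1)%N ->
    d%:Z < f i -> - d%:Z <= f (i + d)%N;
  cubic_dual : forall k j, (1 <= j)%N -> (j < k)%N -> (k <= n.-1)%N ->
    f k < 0 -> j%:Z <= - f k -> f k + j%:Z <= f (k - j)%N }.

Lemma coord_entry c i : (1 <= i)%N -> entry c i = coord c i.
Proof. by case: i. Qed.

Lemma coord_out c p : (p == 0%N) || (size c < p)%N -> coord c p = 0.
Proof. by rewrite /coord; case: p => [|p] //= h; rewrite nth_default. Qed.

Lemma u_ofE n c i : (1 <= i < n)%N -> u_of n c i = Num.max (coord c i) 0.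
Proof. by case/andP=> i1 ilt; rewrite /u_of ilt coord_entry. Qed.

Lemma u_of_out n c i : (n <= i)%N -> u_of n c i = 0.
Proof. by rewrite /u_of ltnNge => ->. Qed.

Lemma v_ofE c i : (2 <= i)%N -> v_of c i = `|Num.min (coord c i.-1) 0|.
Proof. by case: i => [|[|i]]. Qed.

Lemma cubic_coordinate_fun n c : cubic_coordinate n c -> cubic_fun n (coord c).
Proof.
case=> _ [hu hv huv]; split.
- move=> i hi.
  have [[_ ub] _] := hu i ltac:(lia).
  have [[_ vb] _] := hv i.+1 ltac:(lia).
  rewrite u_ofE in ub; last by lia.
  rewrite v_ofE /= in vb; last by lia.
  lia.
- move=> i j i1 j1 ijn fi jfi.
  have [_ hu_i] := hu i ltac:(lia).
  by have := hu_i j; rewrite !u_ofE; lia.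
- move=> i d i1 d1 idn dfi.
  have := huv i (i + d).+1 i1 ltac:(lia) ltac:(lia).
  by rewrite u_ofE ?v_ofE /=; lia.
- move=> k j j1 jk kn fk jfk.
  have [_ hv_k] := hv k.+1 ltac:(lia).
  have := hv_k j; rewrite !v_ofE /=; try lia.
  have -> : (k.+1 - j).-1 = (k - j)%N by lia.
  lia.
Qed.

Section CubicCoordinateOfFun.
Variables (n : nat) (c : seq int).
Hypothesis hc : cubic_fun n (coord c).

Lemma tamari_diagram_u_of : tamari_diagram n (u_of n c).
Proof.
move=> i /andP[i1 iin].
case: (ltnP i n) => [ilt|ige]; last first.
  by rewrite !u_of_out //; split=> [|j hj]; rewrite ?u_of_out; lia.
have [lb ub] := cubic_bounds hc (i := i) ltac:(lia).
rewrite u_ofE; last by lia.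
split=> [|j hj]; first by lia.
case: (posnP j) => [->|j0]; first by rewrite addn0 u_ofE; lia.
case: (ltnP (i + j) n) => hij; last by rewrite u_of_out //; lia.
have := cubic_tamari hc (i := i) (j := j) i1 j0 ltac:(lia).
by rewrite u_ofE; lia.
Qed.

Lemma dual_tamari_diagram_v_of : dual_tamari_diagram n (v_of c).
Proof.
move=> i /andP[i1 iin].
case: (leqP i 1) => [ile|igt].
  have -> : i = 1%N by lia.
  by split=> [|j]; rewrite /v_of ?leq_subr /=; lia.
have [lb ub] := cubic_bounds hc (i := i.-1) ltac:(lia).
rewrite v_ofE //; split=> [|j hj]; first by lia.
case: (posnP j) => [->|j0]; first by rewrite subn0 v_ofE //; lia.
case: (leqP (i - j) 1) => hij.
  have -> : (i - j = 1)%N by lia.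
  rewrite /v_of /=; lia.
have := cubic_dual hc (k := i.-1) (j := j) j0 ltac:(lia) ltac:(lia).
rewrite v_ofE //.
have -> : (i - j).-1 = (i.-1 - j)%N by lia.
lia.
Qed.

Lemma interval_u_of_v_of i j : (1 <= i)%N -> (i < j)%N -> (j <= n)%N ->
  (j - i)%:Z <= u_of n c i -> v_of c j < (j - i)%:Z.
Proof.
move=> i1 ij jn.
case: (ltnP i n) => [ilt|ige]; last by rewrite u_of_out //; lia.
rewrite u_ofE ?v_ofE; try lia.
case: (ltnP i.+1 j) => [ij1 hj|ji]; last first.
  have -> : j.-1 = i by lia.
  lia.
have := cubic_interval hc (i := i) (d := (j.-1 - i)%N) i1 ltac:(lia) ltac:(lia).
have -> : (i + (j.-1 - i))%N = j.-1 by lia.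
lia.
Qed.

End CubicCoordinateOfFun.

Lemma fun_cubic_coordinate n c :
  size c = n.-1 -> cubic_fun n (coord c) -> cubic_coordinate n c.
Proof.
move=> sc hc; split=> //; split.
- exact: tamari_diagram_u_of.
- exact: dual_tamari_diagram_v_of.
- exact: interval_u_of_v_of.
Qed.

Lemma eq_cubic_fun n f g :
  (forall p, (1 <= p <= n.-1)%N -> f p = g p) -> cubic_fun n f -> cubic_fun n g.
Proof.
move=> fg [hb ht hi hd]; split.
- by move=> i hi'; rewrite -fg //; exact: hb.
- by move=> i j i1 j1 ijn; rewrite -!fg; try lia; exact: ht.
- by move=> i d i1 d1 idn; rewrite -!fg; try lia; exact: hi.
- by move=> k j j1 jk kn; rewrite -!fg; try lia; exact: hd.
Qed.

Definition seq_of (n : nat) (x : nat -> int) : seq int := mkseq (fun j => x j.+1) n.-1.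

Lemma size_seq_of n x : size (seq_of n x) = n.-1.
Proof. exact: size_mkseq. Qed.

Lemma coord_seq_of n x p : (1 <= p <= n.-1)%N -> coord (seq_of n x) p = x p.
Proof. by case: p => [|p] //= hp; rewrite /coord nth_mkseq. Qed.

Lemma seq_of_coord n c x : size c = n.-1 ->
  (forall p, (1 <= p <= n.-1)%N -> coord c p = x p) -> c = seq_of n x.
Proof.
move=> sc cx; apply: (@eq_from_nth _ 0); first by rewrite size_seq_of.
move=> i; rewrite sc => hi.
by rewrite -[nth 0 c i]/(coord c i.+1) cx ?nth_mkseq //; lia.
Qed.

Lemma eq_seq_of n x y :
  (forall p, (1 <= p <= n.-1)%N -> x p = y p) -> seq_of n x = seq_of n y.
Proof.
move=> xy; apply: seq_of_coord; first exact: size_seq_of.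
by move=> p hp; rewrite coord_seq_of ?xy.
Qed.

Lemma cubic_coordinate_seq_of n x : cubic_fun n x -> cubic_coordinate n (seq_of n x).
Proof.
move=> hx; apply: fun_cubic_coordinate; first exact: size_seq_of.
by apply: eq_cubic_fun hx => p hp; rewrite coord_seq_of.
Qed.

Lemma size_set_entry c i t : (1 <= i <= size c)%N -> size (set_entry c i t) = size c.
Proof. by move=> hi; rewrite size_set_nth; lia. Qed.

Lemma coord_set_entry c i t p : (1 <= i <= size c)%N ->
  coord (set_entry c i t) p = if p == i then t else coord c p.
Proof.
move=> hi; rewrite /coord nth_set_nth.
by case: p => [|p]; case: i hi => [|i].
Qed.

Lemma set_entry_seq_of n x i t : (1 <= i <= n.-1)%N ->
  set_entry (seq_of n x) i t = seq_of n (fun p => if p == i then t else x p).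
Proof.
move=> hi; have hi' : (1 <= i <= size (seq_of n x))%N by rewrite size_seq_of.
apply: seq_of_coord; first by rewrite size_set_entry // size_seq_of.
by move=> p hp; rewrite coord_set_entry // coord_seq_of.
Qed.

Lemma find_iota_first (P : pred nat) m j : (j < m)%N -> P j ->
  let k := find P (iota 0 m) in
  [/\ (k < m)%N, P k & forall l, (l < k)%N -> ~~ P l].
Proof.
move=> jm pj k.
have hasP : has P (iota 0 m) by apply/hasP; exists j; rewrite ?mem_iota.
have km : (k < m)%N by rewrite -(size_iota 0 m) -has_find.
split=> //.
- by have := nth_find 0 hasP; rewrite nth_iota.
- by move=> l lk; have := before_find 0 lk; rewrite nth_iota ?(ltn_trans lk) // => ->.
Qed.

(* The values at [0] and [n] matter: [prev_lreach] and [next_rreach] may inspect them. *)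
Record sync_fun (n : nat) (s : nat -> int) : Prop := SyncFun {
  sync_cubic : cubic_fun n s;
  sync_neq0 : forall i, (1 <= i <= n.-1)%N -> s i != 0;
  sync_at0 : s 0%N = 0;
  sync_out : forall p, (n <= p)%N -> s p = 0 }.

Definition rreach (s : nat -> int) (p : nat) : int := p%:Z + Num.max (s p) 0.
Definition lreach (s : nat -> int) (p : nat) : int := p%:Z + Num.min (s p) 0.

Definition next_rreach (s : nat -> int) (i : nat) : nat :=
  i.+1 + find (fun j => rreach s (i.+1 + j) == rreach s i) (iota 0 (absz (s i))).

Definition prev_lreach (s : nat -> int) (k : nat) : nat :=
  k.-1 - find (fun j => lreach s (k.-1 - j) == lreach s k) (iota 0 (absz (s k))).

Definition cmin (s : nat -> int) (i : nat) : int :=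
  if s i < 0 then s i else (next_rreach s i)%:Z - i%:Z - 1.

Definition cmax (s : nat -> int) (i : nat) : int :=
  if 0 < s i then s i else (prev_lreach s i)%:Z + 1 - i%:Z.

Section SyncCell.
Variables (n : nat) (s : nat -> int).
Hypothesis hs : sync_fun n s.

Lemma sync_sign i : (1 <= i <= n.-1)%N -> 0 < s i \/ s i < 0.
Proof. by move=> hi; have := sync_neq0 hs hi; lia. Qed.

Lemma next_rreach_spec i : (1 <= i <= n.-1)%N -> 0 < s i ->
  let K := next_rreach s i in
  [/\ (i < K)%N, K%:Z <= i%:Z + s i, rreach s K = rreach s i &
      forall k, (i < k < K)%N -> rreach s k != rreach s i].
Proof.
move=> hi si K; rewrite /K /next_rreach.
set P := (X in find X _).
have [_ ub] := cubic_bounds (sync_cubic hs) hi.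
have hP : P (absz (s i)).-1.
  rewrite /P /rreach; apply/eqP.
  have -> : (i.+1 + (absz (s i)).-1)%N = (i + absz (s i))%N by lia.
  case: (ltnP (i + absz (s i)) n) => hin; last first.
    have -> : (i + absz (s i))%N = n by lia.
    by rewrite (sync_out hs) //; lia.
  have := cubic_tamari (sync_cubic hs) (i := i) (j := absz (s i)).
  by move/(_ ltac:(lia) ltac:(lia) ltac:(lia) si ltac:(lia)); lia.
have [fm fP fmin] := find_iota_first (ltac:(lia) : ((absz (s i)).-1 < absz (s i))%N) hP.
split; [lia | lia | exact/eqP | move=> k hk].
have := fmin (k - i.+1)%N ltac:(lia).
by rewrite /P; have -> : (i.+1 + (k - i.+1))%N = k by lia.
Qed.

Lemma prev_lreach_spec k : (1 <= k <= n.-1)%N -> s k < 0 ->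
  let q := prev_lreach s k in
  [/\ k%:Z + s k <= q%:Z, (q < k)%N, lreach s q = lreach s k &
      forall p, (q < p < k)%N -> lreach s p != lreach s k].
Proof.
move=> hk sk q; rewrite /q /prev_lreach.
set P := (X in find X _).
have [lb _] := cubic_bounds (sync_cubic hs) hk.
have hP : P (absz (s k)).-1.
  rewrite /P /lreach; apply/eqP.
  have -> : (k.-1 - (absz (s k)).-1)%N = (k - absz (s k))%N by lia.
  case: (posnP (k - absz (s k))%N) => hq.
    by rewrite hq (sync_at0 hs); lia.
  have := cubic_dual (sync_cubic hs) (k := k) (j := absz (s k)).
  by move/(_ ltac:(lia) ltac:(lia) ltac:(lia) sk ltac:(lia)); lia.
have [fm fP fmin] := find_iota_first (ltac:(lia) : ((absz (s k)).-1 < absz (s k))%N) hP.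
split; [lia | lia | exact/eqP | move=> p hp].
have := fmin (k.-1 - p)%N ltac:(lia).
by rewrite /P; have -> : (k.-1 - (k.-1 - p))%N = p by lia.
Qed.

Lemma cmin_pos i : (1 <= i <= n.-1)%N -> 0 < s i ->
  [/\ cmin s i = (next_rreach s i)%:Z - i%:Z - 1, 0 <= cmin s i,
      cmin s i < s i & cmax s i = s i].
Proof.
move=> hi si; have [K1 K2 _ _] := next_rreach_spec hi si.
by rewrite /cmin /cmax si ltNge (ltW si) /=; split=> //; lia.
Qed.

Lemma cmax_neg i : (1 <= i <= n.-1)%N -> s i < 0 ->
  [/\ cmin s i = s i, cmax s i = (prev_lreach s i)%:Z + 1 - i%:Z,
      s i < cmax s i & cmax s i <= 0].
Proof.
move=> hi si; have [q1 q2 _ _] := prev_lreach_spec hi si.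
by rewrite /cmin /cmax si ltNge (ltW si) /=; split=> //; lia.
Qed.

Lemma cmin_lt_cmax i : (1 <= i <= n.-1)%N -> cmin s i < cmax s i.
Proof.
move=> hi; case: (sync_sign hi) => si.
- by have [_ _ ? ->] := cmin_pos hi si.
- by have [-> _ ? _] := cmax_neg hi si.
Qed.

Definition vertex (x : nat -> int) : Prop :=
  forall i, (1 <= i <= n.-1)%N -> x i = cmin s i \/ x i = cmax s i.

Section Vertex.
Variable x : nat -> int.
Hypothesis hx : vertex x.

Lemma vertex_sign i : (1 <= i <= n.-1)%N ->
  (0 < s i /\ 0 <= x i /\ x i <= s i) \/ (s i < 0 /\ s i <= x i /\ x i <= 0).
Proof.
move=> hi; case: (sync_sign hi) => si.
- by have [_ ? ? ?] := cmin_pos hi si; left; case: (hx hi); lia.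
- by have [? _ ? ?] := cmax_neg hi si; right; case: (hx hi); lia.
Qed.

Lemma vertex_tamari i j : (1 <= i)%N -> (1 <= j)%N -> (i + j <= n.-1)%N ->
  0 < x i -> j%:Z <= x i -> x (i + j)%N <= x i - j%:Z.
Proof.
move=> i1 j1 ijn xi jxi.
have sC := sync_cubic hs.
have [[si [_ xsi]]|] := vertex_sign (i := i) ltac:(lia); last by lia.
have [[sij [_ xsij]]|] := vertex_sign (i := (i + j)%N) ltac:(lia); last by lia.
have [_ ub] := cubic_bounds sC (i := i) ltac:(lia).
have tij := cubic_tamari sC i1 j1 ijn si ltac:(lia).
have [cmi _ _ cMi] := cmin_pos (i := i) ltac:(lia) si.
case: (hx (i := i) ltac:(lia)) => [xmin|]; last by lia.
have [K1 K2 K3 Kmin] := next_rreach_spec (i := i) ltac:(lia) si.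
set K := next_rreach s i in cmi K1 K2 K3 Kmin.
suff reach_lt : rreach s (i + j) < K%:Z by rewrite /rreach in reach_lt; lia.
rewrite ltNge; apply/negP => Kle.
have hne := Kmin (i + j)%N ltac:(lia).
rewrite /rreach in K3 Kle hne.
have := cubic_tamari sC (i := (i + j)%N) (j := (K - (i + j))%N).
move/(_ ltac:(lia) ltac:(lia) ltac:(lia) sij ltac:(lia)).
have -> : (i + j + (K - (i + j)))%N = K by lia.
lia.
Qed.

Lemma vertex_interval i d : (1 <= i)%N -> (1 <= d)%N -> (i + d <= n.-1)%N ->
  d%:Z < x i -> - d%:Z <= x (i + d)%N.
Proof.
move=> i1 d1 idn dxi.
have := vertex_sign (i := i) ltac:(lia).
have := vertex_sign (i := (i + d)%N) ltac:(lia).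
have := cubic_interval (sync_cubic hs) i1 d1 idn.
lia.
Qed.

Lemma vertex_dual k j : (1 <= j)%N -> (j < k)%N -> (k <= n.-1)%N ->
  x k < 0 -> j%:Z <= - x k -> x k + j%:Z <= x (k - j)%N.
Proof.
move=> j1 jk kn xk jxk.
have sC := sync_cubic hs.
have [|[sk [xsk _]]] := vertex_sign (i := k) ltac:(lia); first by lia.
have [|[skj [skjx _]]] := vertex_sign (i := (k - j)%N) ltac:(lia); first by lia.
have [lb _] := cubic_bounds sC (i := k) ltac:(lia).
have dkj := cubic_dual sC j1 jk kn sk ltac:(lia).
have [cmk cMk _ _] := cmax_neg (i := k) ltac:(lia) sk.
case: (hx (i := k) ltac:(lia)) => [|xmax]; first by lia.
have [q1 q2 q3 qmax] := prev_lreach_spec (k := k) ltac:(lia) sk.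
set q := prev_lreach s k in cMk q1 q2 q3 qmax.
suff reach_gt : q%:Z < lreach s (k - j) by rewrite /lreach in reach_gt; lia.
rewrite ltNge; apply/negP => leq.
have hne := qmax (k - j)%N ltac:(lia).
rewrite /lreach in q3 leq hne.
have := cubic_dual sC (k := (k - j)%N) (j := (k - j - q)%N).
move/(_ ltac:(lia) ltac:(lia) ltac:(lia) skj ltac:(lia)).
have -> : (k - j - (k - j - q))%N = q by lia.
lia.
Qed.

Lemma vertex_cubic_fun : cubic_fun n x.
Proof.
split.
- move=> i hi; have [lb ub] := cubic_bounds (sync_cubic hs) hi.
  by case: (vertex_sign hi); lia.
- exact: vertex_tamari.
- exact: vertex_interval.
- exact: vertex_dual.
Qed.

End Vertex.

Lemma inside_not_cubic k y : (1 <= k <= n.-1)%N ->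
  (forall j, (1 <= j <= n.-1)%N -> (k < j)%N -> y j = cmax s j) ->
  (forall j, (1 <= j <= n.-1)%N -> (j < k)%N -> y j = cmin s j) ->
  cmin s k < y k -> y k < cmax s k -> ~ cubic_fun n y.
Proof.
move=> hk yhi ylo ylb yub hy.
have [lb ub] := cubic_bounds (sync_cubic hs) hk.
case: (sync_sign hk) => sk.
- have [cmk _ _ cMk] := cmin_pos hk sk.
  have [K1 K2 K3 _] := next_rreach_spec hk sk.
  set K := next_rreach s k in cmk K1 K2 K3.
  rewrite /rreach in K3.
  have hK : (1 <= K <= n.-1)%N by lia.
  have sK : 0 < s K by lia.
  have [_ _ _ cMK] := cmin_pos hK sK.
  have := yhi K hK K1.
  have := cubic_tamari hy (i := k) (j := (K - k)%N).
  move/(_ ltac:(lia) ltac:(lia) ltac:(lia) ltac:(lia) ltac:(lia)).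
  have -> : (k + (K - k))%N = K by lia.
  lia.
- have [cmk cMk _ _] := cmax_neg hk sk.
  have [q1 q2 q3 _] := prev_lreach_spec hk sk.
  set q := prev_lreach s k in cMk q1 q2 q3.
  rewrite /lreach in q3.
  have hq : (1 <= q <= n.-1)%N by lia.
  have sq : s q < 0 by lia.
  have [cmq _ _ _] := cmax_neg hq sq.
  have := ylo q hq q2.
  have := cubic_dual hy (k := k) (j := (k - q)%N).
  move/(_ ltac:(lia) ltac:(lia) ltac:(lia) ltac:(lia) ltac:(lia)).
  have -> : (k - (k - q))%N = q by lia.
  lia.
Qed.

Definition raise_from (m i : nat) : int := if (m <= i)%N then cmax s i else cmin s i.

Lemma vertex_raise_from m : vertex (raise_from m).
Proof. by move=> i _; rewrite /raise_from; case: (m <= i)%N; [right | left]. Qed.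

Lemma up_rel_raise_from k : (1 <= k <= n.-1)%N ->
  up_rel n (seq_of n (raise_from k.+1)) k (seq_of n (raise_from k)).
Proof.
move=> hk.
have hsz : (1 <= k <= size (seq_of n (raise_from k.+1)))%N by rewrite size_seq_of.
have entry_k : entry (seq_of n (raise_from k.+1)) k = cmin s k.
  by rewrite coord_entry ?coord_seq_of /raise_from ?ltnn //; case/andP: hk.
have raise_k :
    seq_of n (raise_from k) = set_entry (seq_of n (raise_from k.+1)) k (cmax s k).
  rewrite set_entry_seq_of //; apply: eq_seq_of => p hp.
  rewrite /raise_from; case: eqP => [->|pk]; first by rewrite leqnn.
  by rewrite leq_eqVlt eq_sym (introF eqP pk).
exists (cmax s k); split.
- exact: raise_k.
- by rewrite entry_k; exact: cmin_lt_cmax.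
- by apply/cubic_coordinate_seq_of/vertex_cubic_fun/vertex_raise_from.
- move=> t lt tlt /cubic_coordinate_fun hy; rewrite entry_k in lt.
  apply: (inside_not_cubic hk _ _ _ _ hy); rewrite ?coord_set_entry ?eqxx //.
  + move=> j hj kj.
    by rewrite coord_set_entry // coord_seq_of // /raise_from (gtn_eqF kj) kj.
  + move=> j hj jk.
    by rewrite coord_set_entry // coord_seq_of // /raise_from (ltn_eqF jk) ltnNge (ltnW jk).
Qed.

Lemma ups_raise_from k : (k <= n.-1)%N ->
  ups n (seq_of n (raise_from k.+1)) k (seq_of n (raise_from 1)).
Proof.
elim: k => [|k IH] hk //=.
exists (seq_of n (raise_from k.+1)); split.
- by apply: up_rel_raise_from; lia.
- by apply: IH; lia.
Qed.

Lemma cell_of_sync : is_cell n (seq_of n (cmin s)) (seq_of n (cmax s)).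
Proof.
have cmin_top : seq_of n (cmin s) = seq_of n (raise_from n.-1.+1).
  by apply: eq_seq_of => p /andP[_ hp]; rewrite /raise_from ltnNge hp.
have cmax_bottom : seq_of n (cmax s) = seq_of n (raise_from 1).
  by apply: eq_seq_of => p /andP[hp _]; rewrite /raise_from hp.
split; last by rewrite /maximal_correspondent cmin_top cmax_bottom; exact: ups_raise_from.
split; first by apply/cubic_coordinate_seq_of/vertex_cubic_fun => i _; left.
move=> i hi; exists (cmax s i); split.
- by rewrite coord_entry ?coord_seq_of //; [exact: cmin_lt_cmax | case/andP: hi].
- rewrite set_entry_seq_of //; apply/cubic_coordinate_seq_of/vertex_cubic_fun => p _.
  by case: eqP => [->|_]; [right | left].
Qed.

Lemma Gamma_cell_of_sync : Gamma (seq_of n (cmin s)) (seq_of n (cmax s)) = seq_of n s.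
Proof.
rewrite /Gamma; apply: (@eq_from_nth _ 0).
  by rewrite size_map size_zip !size_seq_of minnn.
move=> i; rewrite size_map size_zip !size_seq_of minnn => hi.
rewrite (nth_map (0, 0)) ?size_zip ?size_seq_of ?minnn //.
rewrite nth_zip ?size_seq_of //= !nth_mkseq // /gamma.
have hi' : (1 <= i.+1 <= n.-1)%N by lia.
case: (sync_sign hi') => si.
- have [_ ? ? ->] := cmin_pos hi' si.
  by have -> : (cmin s i.+1 < 0) = false by lia.
- by have [-> _ _ _] := cmax_neg hi' si; rewrite si.
Qed.

Lemma synchronized_seq_of : synchronized n (seq_of n s).
Proof.
split; first exact/cubic_coordinate_seq_of/(sync_cubic hs).
move=> i hi; have i1 : (1 <= i)%N by case/andP: hi.
by rewrite coord_entry // coord_seq_of //; exact: (sync_neq0 hs).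
Qed.

End SyncCell.

Lemma sync_fun_inj n s1 s2 : sync_fun n s1 -> sync_fun n s2 ->
  seq_of n s1 = seq_of n s2 -> s1 = s2.
Proof.
move=> hs1 hs2 e; apply: functional_extensionality => p.
case: (boolP ((p == 0%N) || (n <= p)%N)) => [/orP[/eqP -> | hp] | hp].
- by rewrite (sync_at0 hs1) (sync_at0 hs2).
- by rewrite (sync_out hs1) // (sync_out hs2).
- have hp' : (1 <= p <= n.-1)%N by lia.
  by rewrite -(coord_seq_of s1 hp') -(coord_seq_of s2 hp') e.
Qed.

Lemma sync_fun_coord n c : synchronized n c -> sync_fun n (coord c).
Proof.
case=> hc hnz; split.
- exact: cubic_coordinate_fun.
- by move=> i hi; rewrite -coord_entry ?hnz //; case/andP: hi.
- by [].
- by move=> p hp; rewrite coord_out // hc.1; lia.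
Qed.

Lemma up_rel_uniq n c i d1 d2 : up_rel n c i d1 -> up_rel n c i d2 -> d1 = d2.
Proof.
case=> t1 [-> lt1 cc1 min1] [t2 [-> lt2 cc2 min2]].
case: (ltgtP t1 t2) => [t12|t21|-> //].
- by case: (min2 t1 lt1 t12).
- by case: (min1 t2 lt2 t21).
Qed.

Lemma ups_uniq n k c d1 d2 : ups n c k d1 -> ups n c k d2 -> d1 = d2.
Proof.
elim: k c => [|k IH] c /=; first by move=> -> ->.
case=> e1 [up1 ups1] [e2 [up2 ups2]].
by move: ups2; rewrite -(up_rel_uniq up1 up2); exact: IH.
Qed.

(* Every recursive call moves strictly to the right, so the fuel [n.+1] of
   [sync_of_cmin] is never exhausted before position [n] is passed. *)
Fixpoint sync_of_cmin_rec (n : nat) (f : nat -> int) (fuel p : nat) : int :=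
  if fuel is fuel'.+1 then
    if (p == 0%N) || (n <= p)%N then 0
    else if f p < 0 then f p
    else f p + 1 + Num.max (sync_of_cmin_rec n f fuel' (p + absz (f p)).+1) 0
  else 0.

Definition sync_of_cmin (n : nat) (f : nat -> int) : nat -> int :=
  sync_of_cmin_rec n f n.+1.

Lemma sync_of_cmin_rec_fuel n f fuel1 fuel2 p :
  (n - p < fuel1)%N -> (n - p < fuel2)%N ->
  sync_of_cmin_rec n f fuel1 p = sync_of_cmin_rec n f fuel2 p.
Proof.
elim: fuel1 fuel2 p => [|fuel1 IH] [|fuel2] p //= h1 h2.
case: ((p == 0%N) || (n <= p)%N) /orP => [//|hp].
by case: (f p < 0) => //; rewrite (IH fuel2) //; lia.
Qed.

Lemma sync_of_cminE n f p : sync_of_cmin n f p =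
  if (p == 0%N) || (n <= p)%N then 0
  else if f p < 0 then f p
  else f p + 1 + Num.max (sync_of_cmin n f (p + absz (f p)).+1) 0.
Proof.
rewrite /sync_of_cmin /=.
case: ((p == 0%N) || (n <= p)%N) /orP => [//|hp].
by case: (f p < 0) => //; rewrite (@sync_of_cmin_rec_fuel n f n n.+1) //; lia.
Qed.

Section SyncOfCmin.
Variables (n : nat) (f : nat -> int).
Hypothesis hf : cubic_fun n f.
Hypothesis f_below_top :
  forall i, (1 <= i <= n.-1)%N -> 0 <= f i -> f i < n%:Z - i%:Z.
Hypothesis f_interval_strict : forall i, (1 <= i <= n.-1)%N -> 1 <= f i ->
  (i + absz (f i) <= n.-1)%N -> - f i <= f (i + absz (f i))%N.
Hypothesis f_tamari_strict : forall i k, (1 <= i)%N -> (i < k)%N -> (k <= n.-1)%N ->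
  0 < f i -> (k - i)%N%:Z <= f i -> 0 <= f k -> f k < f i - (k - i)%N%:Z.

Local Notation s := (sync_of_cmin n f).
Local Notation jump p := (p + absz (f p)).+1.

Lemma sync_of_cmin_out p : (p == 0%N) || (n <= p)%N -> s p = 0.
Proof. by move=> hp; rewrite sync_of_cminE hp. Qed.

Lemma sync_of_cmin_neg p : (1 <= p <= n.-1)%N -> f p < 0 -> s p = f p.
Proof.
move=> hp fp; rewrite sync_of_cminE fp.
by have -> : (p == 0%N) || (n <= p)%N = false by lia.
Qed.

Lemma sync_of_cmin_nneg p : (1 <= p <= n.-1)%N -> 0 <= f p ->
  s p = f p + 1 + Num.max (s (jump p)) 0.
Proof.
move=> hp fp; rewrite sync_of_cminE.
have -> : (p == 0%N) || (n <= p)%N = false by lia.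
by have -> : (f p < 0) = false by lia.
Qed.

Lemma jump_le_n p : (1 <= p <= n.-1)%N -> 0 <= f p -> (jump p <= n)%N.
Proof. by move=> hp fp; have := f_below_top hp fp; lia. Qed.

Lemma rreach_jump p : (1 <= p <= n.-1)%N -> 0 <= f p -> rreach s p = rreach s (jump p).
Proof. by move=> hp fp; rewrite /rreach (sync_of_cmin_nneg hp fp); lia. Qed.

Lemma rreach_le_n p : (p <= n)%N -> rreach s p <= n%:Z.
Proof.
have [m] := ubnP (n - p); elim: m p => // m IH p np pn.
case: (boolP ((p == 0%N) || (n <= p)%N)) => hp.
  by rewrite /rreach sync_of_cmin_out //; lia.
case: (ltP (f p) 0) => fp.
  by rewrite /rreach sync_of_cmin_neg //; lia.
rewrite rreach_jump; try lia.
by apply: IH; [lia | apply: jump_le_n; lia].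
Qed.

Lemma rreach_inside_jump p : (1 <= p <= n.-1)%N -> 0 <= f p ->
  forall m, (p < m < jump p)%N ->
  rreach s m < (jump p)%:Z /\ (f m < 0 -> - (m - p)%N%:Z <= f m).
Proof.
move=> hp fp; have jn := jump_le_n hp fp.
move=> m; have [d] := ubnP (jump p - m); elim: d m => // d IH m hd hm.
have hm' : (1 <= m <= n.-1)%N by lia.
case: (ltP (f m) 0) => fm.
- split; first by rewrite /rreach sync_of_cmin_neg //; lia.
  move=> _; case: (ltnP (m - p) (absz (f p))) => mp.
  + have := cubic_interval hf (i := p) (d := (m - p)%N).
    move/(_ ltac:(lia) ltac:(lia) ltac:(lia) ltac:(lia)).
    have -> : (p + (m - p))%N = m by lia.
    lia.
  + have em : m = (p + absz (f p))%N by lia.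
    by have := f_interval_strict hp ltac:(lia) ltac:(lia); rewrite -em; lia.
- split; last by lia.
  have := f_tamari_strict (i := p) (k := m).
  move/(_ ltac:(lia) ltac:(lia) ltac:(lia) ltac:(lia) ltac:(lia) fm) => fmp.
  rewrite rreach_jump //.
  by case: (IH (jump m) ltac:(lia) ltac:(lia)).
Qed.

Lemma rreach_nested p : (1 <= p <= n.-1)%N -> 0 <= f p ->
  forall m, (p < m)%N -> m%:Z <= rreach s p ->
  rreach s m <= rreach s p /\ (m%:Z < rreach s p -> f m < 0 -> - (m - p)%N%:Z <= f m).
Proof.
have [d] := ubnP (n - p); elim: d p => // d IH p hd hp fp m pm mp.
have jn := jump_le_n hp fp.
have pj := rreach_jump hp fp.
have jump_in : (jump p < n)%N -> rreach s (jump p) = (jump p)%:Z \/ 0 <= f (jump p).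
  move=> jlt; case: (ltP (f (jump p)) 0) => fj; last by right.
  by left; rewrite /rreach sync_of_cmin_neg //; lia.
have jump_out : jump p = n -> rreach s (jump p) = n%:Z.
  by move=> ->; rewrite /rreach sync_of_cmin_out ?leqnn ?orbT //; lia.
case: (ltngtP m (jump p)) => mj.
- have [inner neg] := rreach_inside_jump hp fp (m := m) ltac:(lia).
  by split=> //; rewrite pj /rreach in inner *; lia.
- have jn' : (jump p < n)%N by case: (ltnP (jump p) n) => // ?; have := jump_out; lia.
  have [|fj] := jump_in jn'; first by lia.
  have [IH1 IH2] := IH (jump p) ltac:(lia) ltac:(lia) fj m mj ltac:(lia).
  by split=> [|mlt fm]; [lia | have := IH2 ltac:(lia) fm; lia].
- subst m; split=> [|mlt fm]; first by rewrite pj.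
  case: (ltnP (jump p) n) => hj; last by have := jump_out; lia.
  by case: (jump_in hj); lia.
Qed.

Lemma sync_of_cmin_sign i : (1 <= i <= n.-1)%N ->
  (f i < 0 /\ s i = f i) \/ (0 <= f i /\ 0 < s i).
Proof.
move=> hi; case: (ltP (f i) 0) => fi; first by left; rewrite sync_of_cmin_neg.
by right; rewrite sync_of_cmin_nneg //; lia.
Qed.

Lemma cubic_fun_sync_of_cmin : cubic_fun n s.
Proof.
have sgn := sync_of_cmin_sign.
split.
- move=> i hi; have [lb ub] := cubic_bounds hf hi.
  have := rreach_le_n (p := i) ltac:(lia).
  by rewrite /rreach; case: (sgn i hi); lia.
- move=> i j i1 j1 ijn si jsi.
  case: (sgn i ltac:(lia)) => [|[fi _]]; first by lia.
  case: (sgn (i + j)%N ltac:(lia)) => [|[fij sij]]; first by lia.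
  have := rreach_nested (p := i) ltac:(lia) fi (m := (i + j)%N) ltac:(lia).
  by rewrite /rreach; lia.
- move=> i d i1 d1 idn dsi.
  case: (sgn i ltac:(lia)) => [|[fi _]]; first by lia.
  case: (sgn (i + d)%N ltac:(lia)) => [[fid sid]|]; last by lia.
  have := rreach_nested (p := i) ltac:(lia) fi (m := (i + d)%N) ltac:(lia).
  have -> : (i + d - i)%N = d by lia.
  by rewrite /rreach; lia.
- move=> k j j1 jk kn sk jsk.
  case: (sgn k ltac:(lia)) => [[fk sfk]|]; last by lia.
  case: (sgn (k - j)%N ltac:(lia)) => [[fkj sfkj]|]; last by lia.
  by have := cubic_dual hf j1 jk kn fk; lia.
Qed.

Lemma sync_fun_sync_of_cmin : sync_fun n s.
Proof.
split.
- exact: cubic_fun_sync_of_cmin.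
- by move=> i hi; case: (sync_of_cmin_sign hi) => -[] fi si; apply/eqP; lia.
- by rewrite sync_of_cmin_out.
- by move=> p hp; rewrite sync_of_cmin_out // hp orbT.
Qed.

Lemma cmin_sync_of_cmin i : (1 <= i <= n.-1)%N -> cmin s i = f i.
Proof.
move=> hi; case: (ltP (f i) 0) => fi.
  by rewrite /cmin sync_of_cmin_neg // fi.
have hs := sync_fun_sync_of_cmin.
have si : 0 < s i by rewrite sync_of_cmin_nneg //; lia.
have [-> _ _ _] := cmin_pos hs hi si.
have [K1 _ K3 Kmin] := next_rreach_spec hs hi si.
suff -> : next_rreach s i = jump i by lia.
have pj := rreach_jump hi fi.
have jn := jump_le_n hi fi.
case: (ltngtP (next_rreach s i) (jump i)) => // hK.
- have [inner _] := rreach_inside_jump hi fi (m := next_rreach s i) ltac:(lia).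
  by move: inner K3; rewrite pj /rreach; lia.
- by have := Kmin (jump i) ltac:(lia); rewrite -pj eqxx.
Qed.

End SyncOfCmin.

Section MinimalCellular.
Variables (n : nat) (c : seq int).
Hypothesis hc : minimal_cellular n c.

Lemma minimal_cellular_raise i : (1 <= i <= n.-1)%N ->
  exists2 t, coord c i < t & cubic_fun n (fun p => if p == i then t else coord c p).
Proof.
move=> hi; have [t [lt ht]] := hc.2 i hi.
have hsz : (1 <= i <= size c)%N by rewrite hc.1.1.
exists t; first by rewrite -coord_entry //; case/andP: hi.
apply: eq_cubic_fun (cubic_coordinate_fun ht) => p _.
by rewrite coord_set_entry.
Qed.

Lemma minimal_cellular_below_top i : (1 <= i <= n.-1)%N ->
  0 <= coord c i -> coord c i < n%:Z - i%:Z.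
Proof.
move=> hi ci; have [t lt ht] := minimal_cellular_raise hi.
by have := cubic_bounds ht hi; rewrite eqxx; lia.
Qed.

Lemma minimal_cellular_interval i : (1 <= i <= n.-1)%N -> 1 <= coord c i ->
  (i + absz (coord c i) <= n.-1)%N -> - coord c i <= coord c (i + absz (coord c i))%N.
Proof.
move=> hi ci hin; have [t lt ht] := minimal_cellular_raise hi.
have := cubic_interval ht (i := i) (d := absz (coord c i)) ltac:(lia) ltac:(lia) hin.
by rewrite eqxx (_ : (_ + _ == i) = false); lia.
Qed.

Lemma minimal_cellular_tamari i k : (1 <= i)%N -> (i < k)%N -> (k <= n.-1)%N ->
  0 < coord c i -> (k - i)%N%:Z <= coord c i -> 0 <= coord c k ->
  coord c k < coord c i - (k - i)%N%:Z.
Proof.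
move=> i1 ik kn ci kci ck; have [t lt ht] := minimal_cellular_raise (i := k) ltac:(lia).
have := cubic_tamari ht (i := i) (j := (k - i)%N) i1 ltac:(lia) ltac:(lia).
have -> : (i + (k - i))%N = k by lia.
by rewrite eqxx (_ : (i == k) = false); lia.
Qed.

End MinimalCellular.

Lemma cell_eq_cell_of_sync n cm cM : is_cell n cm cM ->
  exists s, [/\ sync_fun n s, cm = seq_of n (cmin s) & cM = seq_of n (cmax s)].
Proof.
move=> [hmin hmax]; set s := sync_of_cmin n (coord cm); exists s.
have hf := cubic_coordinate_fun hmin.1.
have hs : sync_fun n s.
  apply: sync_fun_sync_of_cmin hf _ _ _.
  - exact: minimal_cellular_below_top.
  - exact: minimal_cellular_interval.
  - exact: minimal_cellular_tamari.
have cmE : cm = seq_of n (cmin s).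
  apply: seq_of_coord hmin.1.1 _ => p hp.
  by rewrite cmin_sync_of_cmin //; [exact: minimal_cellular_below_top |
    exact: minimal_cellular_interval | exact: minimal_cellular_tamari].
split=> //; have [_] := cell_of_sync hs.
by rewrite /maximal_correspondent -cmE; exact: ups_uniq.
Qed.

Theorem theorem4p8 (n : nat) (hn : (1 <= n)%N) :
  (* Gamma maps cells of size n into synchronized cubic coordinates *)
  (forall cm cM : seq int, is_cell n cm cM -> synchronized n (Gamma cm cM)) /\
  (* injective on cells *)
  (forall cm cM cm' cM' : seq int, is_cell n cm cM -> is_cell n cm' cM' ->
     Gamma cm cM = Gamma cm' cM' -> cm = cm' /\ cM = cM') /\
  (* surjective onto synchronized cubic coordinates *)
  (forall c : seq int, synchronized n c ->
     exists cm cM : seq int, is_cell n cm cM /\ Gamma cm cM = c).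
Proof.
split; [|split].
- move=> cm cM /cell_eq_cell_of_sync[s [hs -> ->]].
  by rewrite Gamma_cell_of_sync //; exact: synchronized_seq_of.
- move=> cm cM cm' cM'.
  move=> /cell_eq_cell_of_sync[s [hs -> ->]] /cell_eq_cell_of_sync[s' [hs' -> ->]].
  by rewrite !Gamma_cell_of_sync // => /(sync_fun_inj hs hs') ->.
- move=> c hc; have hs := sync_fun_coord hc.
  exists (seq_of n (cmin (coord c))), (seq_of n (cmax (coord c))); split.
  + exact: cell_of_sync.
  + by rewrite Gamma_cell_of_sync //; symmetry; apply: seq_of_coord hc.1.1 _.
Qed.
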